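(* Let $p$ be a prime, $e\ge1$, $G$ a finite abelian group of order $p^e$, and $q\neq p$ a prime. Let $S=\bigoplus_\rho S_\rho\subset\mathbf{Q}[G]$, $S_\rho\cong\mathbf{Z}[\omega_{k(\rho)}]$, be the integral closure of $\mathbf{Z}[G]$ in $\mathbf{Q}[G]$, the sum running over the chosen representatives $\rho$ of the equivalence classes of representations, and let $e_\rho\in S$ be the idempotent of the factor $S_\rho$. Let $\psi^\ell$ ($\ell$ a prime) denote the ring endomorphism of $\mathbf{Q}[G]$ with $\psi^\ell(g)=g^\ell$. Then $$\psi^p(e_\rho)=\sum_{\tau:\ \psi\tau=\rho}e_\tau\ \text{ if }\rho\neq1,\qquad \psi^p(e_1)=e_1+\sum_{\tau\neq1,\ \psi\tau=1}e_\tau,\qquad \psi^q(e_\rho)=e_\rho,$$ where the sums run over chosen representatives $\tau$.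
   Context: A representation is a group homomorphism $\rho\colon G\to\mathbf{C}^*$; its level $k(\rho)$ is defined by $|\rho(G)|=p^{k(\rho)}$. Two representations are equivalent if they have the same kernel; $1$ is the trivial representation. For a representation $\tau$ of positive level, $\psi\tau$ is $x\mapsto\tau(x^p)$. A representative is chosen in each equivalence class so that, for chosen representatives $\tau,\rho$, if $\psi\tau$ is equivalent to $\rho$ then $\psi\tau=\rho$. $\omega_k=\exp(2\pi i/p^k)$. $\mathbf{Q}[G]\cong\bigoplus_\rho\mathbf{Q}(\omega_{k(\rho)})$ via the maps induced by the $\rho$, and $S_\rho$ is the preimage of $\mathbf{Z}[\omega_{k(\rho)}]$ in the corresponding factor. *)

From HB Require Import structures.
From mathcomp Require Import all_boot all_order all_algebra all_fingroup all_field.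
Set Implicit Arguments. Unset Strict Implicit. Unset Printing Implicit Defensive.
Import GRing.Theory Num.Theory.
Local Open Scope ring_scope.

(* C is modelled by algC (all character values are roots of
   unity, hence algebraic). The group G is the whole finGroupType gT. *)

Definition QG (gT : finGroupType) := {ffun gT -> rat}.

Definition is_rep (gT : finGroupType) (rho : gT -> algC) : Prop :=
  (forall x y : gT, rho (x * y)%g = rho x * rho y) /\ (forall x : gT, rho x != 0).

Definition rep_ker (gT : finGroupType) (rho : gT -> algC) : {set gT} :=
  [set x | rho x == 1].
Definition rep_equiv (gT : finGroupType) (rho sigma : gT -> algC) : Prop :=
  rep_ker rho = rep_ker sigma.

Definition rep_image_card (gT : finGroupType) (rho : gT -> algC) : nat :=
  size (undup [seq rho x | x <- enum gT]).
Definition level (p : nat) (gT : finGroupType) (rho : gT -> algC) : nat :=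
  logn p (rep_image_card rho).

Definition psi_rep (p : nat) (gT : finGroupType) (tau : gT -> algC) : gT -> algC :=
  fun x => tau (x ^+ p)%g.

Definition rep_hat (gT : finGroupType) (rho : gT -> algC) (a : QG gT) : algC :=
  \sum_(g : gT) ratr (a g) * rho g.

(* psi^l : Q-linear (ring) endomorphism of Q[G] with g |-> g^l. *)
Definition psiQ (l : nat) (gT : finGroupType) (a : QG gT) : QG gT :=
  [ffun h : gT => \sum_(g : gT | (g ^+ l)%g == h) a g].

From HB Require Import structures.
From mathcomp Require Import all_boot all_algebra all_fingroup all_solvable all_field.
From mathcomp Require Import all_character.
Set Implicit Arguments.
Unset Strict Implicit.
Unset Printing Implicit Defensive.
Import GRing.Theory Num.Theory.
Local Open Scope ring_scope.

(* Two representations of G with the same kernel differ by a Galois automorphism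
   of the cyclotomic field: their images are cyclic groups of roots of unity of
   the same order. Every representation is equivalent to a chosen one, so by
   Fourier inversion over the linear characters an element of Q[G] is determined
   by its values under the chosen representatives, and any representation [s]
   sends [e_j] to 1 or 0 according as [ker s = ker rho_j] or not. As
   [s (psi^l a) = (psi^l s) a], the element [psi^l e_i] is the sum of the [e_k]
   with [ker (psi^l rho_k) = ker rho_i]. For [l = q] prime to [|G|], [psi^q]
   preserves kernels, leaving only [k = i]. For [l = p] the compatibility of the
   choice with [psi] turns the kernel condition into [psi rho_k = rho_i] when
   [rho_k] has positive level, i.e. is nontrivial; the trivial [rho_k] only
   contributes when [rho_i] is trivial too. *)

Lemma unity_root_coprime_eq1 (z : algC) a b :
  (0 < a)%N -> coprime a b -> z ^+ a = 1 -> z ^+ b = 1 -> z = 1.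
Proof.
move=> a_gt0 co_ab za1 zb1; have [m prim_z m_dvd_a] := prim_order_exists a_gt0 za1.
have : (m %| gcdn a b)%N by rewrite dvdn_gcd m_dvd_a (prim_order_dvd prim_z) zb1 eqxx.
by rewrite (eqP co_ab) dvdn1 => /eqP m1; have := prim_expr_order prim_z; rewrite m1 expr1.
Qed.

Lemma rep_ker_eqT (gT : finGroupType) (s : gT -> algC) :
  (rep_ker s == [set: gT]) = [forall x, s x == 1].
Proof.
apply/eqP/forallP => [kerT x | s1]; last by apply/setP => x; rewrite !inE s1.
by have := in_setT x; rewrite -kerT inE.
Qed.

Lemma psi_rep_trivial (gT : finGroupType) (s : gT -> algC) l :
  [forall x, s x == 1] -> [forall x, psi_rep l s x == 1].
Proof. by move=> /forallP s1; apply/forallP => x; apply: s1. Qed.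

Section Representation.

Variables (gT : finGroupType) (r : gT -> algC).
Hypothesis r_rep : is_rep r.

Lemma repM x y : r (x * y)%g = r x * r y.
Proof. exact: r_rep.1. Qed.

Lemma rep1 : r 1%g = 1.
Proof. by apply: (mulfI (r_rep.2 1%g)); rewrite -repM mulg1 mulr1. Qed.

Lemma repX x k : r (x ^+ k)%g = r x ^+ k.
Proof. by elim: k => [|k IHk]; rewrite ?rep1 // expgS exprS repM IHk. Qed.

Lemma repV x : r x^-1%g = (r x)^-1.
Proof.
by apply: (mulfI (r_rep.2 x)); rewrite -repM mulgV rep1 divff ?r_rep.2.
Qed.

Lemma rep_exp_card x : r x ^+ #|gT| = 1.
Proof. by rewrite -repX -cardsT expg_cardG ?inE ?rep1. Qed.

Lemma rep_eq_ker x y : (r x == r y) = ((x * y^-1)%g \in rep_ker r).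
Proof.
by rewrite inE repM repV (can2_eq (mulfVK (r_rep.2 y)) (mulfK (r_rep.2 y))) mul1r.
Qed.

Lemma rep_ker_group : group_set (rep_ker r).
Proof.
by apply/group_setP; split=> [|x y]; rewrite !inE ?rep1 // repM => /eqP-> /eqP->; rewrite mulr1.
Qed.

(* [G / ker r] embeds into the multiplicative group of the field [algC]. *)
Lemma rep_image_cyclic : exists g, forall x, exists k, r x = r g ^+ k.
Proof.
pose K := Group rep_ker_group.
have nK x : x \in 'N(K)%g.
  rewrite inE; apply/subsetP => y; rewrite mem_conjg !inE !repM !repV invrK.
  by rewrite mulrC mulfVK ?r_rep.2.
pose f (c : coset_of K) := r (repr c).
have f_coset x : f (coset K x) = r x.
  have /rcosetP[k] : repr (coset K x) \in (K :* x)%g.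
    by apply/rcoset_kercosetP; rewrite ?nK ?coset_reprK.
  by rewrite inE /f => /eqP rk ->; rewrite repM rk mul1r.
have fM : {in [set: coset_of K] &, {morph f : u v / (u * v)%g >-> u * v}}.
  move=> u v _ _; rewrite -[u]coset_reprK -[v]coset_reprK -morphM ?nK //.
  by rewrite !f_coset repM.
have f_inj c : c \in [set: coset_of K] -> f c = 1 <-> c = 1%g.
  split=> [fc1 | ->]; last by rewrite -(morph1 (coset_morphism K)) f_coset rep1.
  by rewrite -(coset_reprK c) coset_id // inE; apply/eqP.
have /cyclicP[c gen_c] := field_mul_group_cyclic fM f_inj.
exists (repr c) => x.
have /cycleP[k xk] : coset K x \in <[c]>%g by rewrite -gen_c inE.
by exists k; rewrite -f_coset xk -{1}(coset_reprK c) -morphX ?nK // f_coset repX.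
Qed.

Lemma rep_image_card_prim g m :
    (forall x, exists k, r x = r g ^+ k) -> m.-primitive_root (r g) ->
  rep_image_card r = m.
Proof.
move=> gen_g prim_g; rewrite /rep_image_card -(size_iota 0 m).
rewrite -(size_map (fun k => r g ^+ k)); apply: perm_size.
apply: uniq_perm; first exact: undup_uniq.
  rewrite map_inj_in_uniq ?iota_uniq // => a b; rewrite !mem_iota => ltam ltbm.
  by move/eqP; rewrite (eq_prim_root_expr prim_g) !modn_small // => /eqP.
move=> z; rewrite mem_undup; apply/mapP/mapP => [[x _ ->] | [k _ ->]].
  have [k ->] := gen_g x; rewrite -(prim_expr_mod prim_g).
  by exists (k %% m)%N; rewrite // mem_iota ltn_mod (prim_order_gt0 prim_g).
by exists (g ^+ k)%g; rewrite ?mem_enum ?repX.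
Qed.

Lemma rep_level_gt0 p e :
  prime p -> #|gT| = (p ^ e)%N -> ~~ [forall x, r x == 1] -> (0 < level p r)%N.
Proof.
move=> p_pr cardG r_nontriv; have [g gen_g] := rep_image_cyclic.
have G_gt0 : (0 < #|gT|)%N by rewrite cardG expn_gt0 prime_gt0.
have [m prim_g m_dvd_G] := prim_order_exists G_gt0 (rep_exp_card g).
have m_neq1 : m != 1%N.
  apply: contraNneq r_nontriv => m1; apply/forallP => x; have [k ->] := gen_g x.
  by have := prim_expr_order prim_g; rewrite m1 expr1 => ->; rewrite expr1n.
rewrite cardG in m_dvd_G; have [t _ mE] := dvdn_pfactor _ _ p_pr m_dvd_G.
rewrite /level (rep_image_card_prim gen_g prim_g) mE pfactorK // lt0n.
by apply: contraNneq m_neq1 => t0; rewrite mE t0.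
Qed.

Lemma psi_rep_rep l : is_rep (psi_rep l r).
Proof. by split=> [x y | x]; rewrite /psi_rep !repX ?repM ?exprMn ?expf_neq0 ?r_rep.2. Qed.

Lemma rep_ker_psi_coprime l : coprime l #|gT| -> rep_ker (psi_rep l r) = rep_ker r.
Proof.
move=> co_lG; apply/setP => x; rewrite !inE /psi_rep repX.
apply/eqP/eqP => [rxl1 | ->]; last exact: expr1n.
apply: (unity_root_coprime_eq1 _ _ (rep_exp_card x) rxl1); last by rewrite coprime_sym.
by rewrite -cardsT cardG_gt0.
Qed.

End Representation.

Section SameKernel.

Variables (gT : finGroupType) (r s : gT -> algC).
Hypotheses (r_rep : is_rep r) (s_rep : is_rep s) (ker_rs : rep_ker r = rep_ker s).

Lemma rep_ker_eq1 x : (r x == 1) = (s x == 1).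
Proof. by have := congr1 (fun A : {set gT} => x \in A) ker_rs; rewrite /= !inE. Qed.

Lemma rep_ker_congr x y : r x = r y -> s x = s y.
Proof. by move/eqP; rewrite (rep_eq_ker r_rep) ker_rs -(rep_eq_ker s_rep) => /eqP. Qed.

Lemma rep_ker_prim_root g m : m.-primitive_root (r g) -> m.-primitive_root (s g).
Proof.
move=> prim_rg; have m_gt0 := prim_order_gt0 prim_rg.
have sg_dvd t : (s g ^+ t == 1) = (m %| t)%N.
  by rewrite -(repX s_rep) -rep_ker_eq1 (repX r_rep) (prim_order_dvd prim_rg).
have [m' prim_sg m'_dvd_m] := prim_order_exists m_gt0 (eqP (etrans (sg_dvd m) (dvdnn m))).
suff -> : m = m' by [].
by apply/eqP; rewrite eqn_dvd m'_dvd_m -sg_dvd -(prim_order_dvd prim_sg) dvdnn.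
Qed.

(* [s g = r g ^+ k] with [k] prime to the common order of [r g] and [s g], and
   some cyclotomic automorphism raises every such root of unity to the [k]. *)
Lemma rep_ker_galois : exists u : {rmorphism algC -> algC}, forall x, s x = u (r x).
Proof.
have [g gen_g] := rep_image_cyclic r_rep.
have G_gt0 : (0 < #|gT|)%N by rewrite -cardsT cardG_gt0.
have [m prim_rg _] := prim_order_exists G_gt0 (rep_exp_card r_rep g).
have prim_sg := rep_ker_prim_root prim_rg.
have [[k /= _] sgE] := prim_rootP prim_rg (prim_expr_order prim_sg).
have [u uE] : {u : {rmorphism algC -> algC} | forall z, z ^+ m = 1 -> u z = z ^+ k}.
  by apply: Qn_aut_exists; rewrite -(prim_root_exp_coprime _ prim_rg) -sgE.
exists u => x; have [a rxE] := gen_g x.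
have -> : s x = s (g ^+ a)%g by apply: rep_ker_congr; rewrite rxE (repX r_rep).
by rewrite rxE (repX s_rep) rmorphXn sgE uE // (prim_expr_order prim_rg).
Qed.

End SameKernel.

Section RepHat.

Variables (gT : finGroupType) (r : gT -> algC).

Lemma rep_hat0 : rep_hat r 0 = 0.
Proof. by rewrite /rep_hat big1 // => g _; rewrite ffunE rmorph0 mul0r. Qed.

Lemma rep_hatD a b : rep_hat r (a + b) = rep_hat r a + rep_hat r b.
Proof. by rewrite /rep_hat -big_split; apply: eq_bigr => g _; rewrite ffunE rmorphD mulrDl. Qed.

Lemma rep_hatB a b : rep_hat r (a - b) = rep_hat r a - rep_hat r b.
Proof. by rewrite /rep_hat -sumrB; apply: eq_bigr => g _; rewrite !ffunE rmorphB mulrBl. Qed.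

Lemma rep_hat_sum (I : finType) (P : pred I) (F : I -> QG gT) :
  rep_hat r (\sum_(i | P i) F i) = \sum_(i | P i) rep_hat r (F i).
Proof. exact: (big_morph (rep_hat r) rep_hatD rep_hat0). Qed.

Lemma rep_hat_rmorph (s : gT -> algC) (u : {rmorphism algC -> algC}) a :
  (forall x, s x = u (r x)) -> rep_hat s a = u (rep_hat r a).
Proof.
by move=> sE; rewrite /rep_hat rmorph_sum; apply: eq_bigr => g _; rewrite rmorphM fmorph_rat sE.
Qed.

Lemma rep_hat_psiQ l a : rep_hat r (psiQ l a) = rep_hat (psi_rep l r) a.
Proof.
rewrite /rep_hat [RHS](partition_big (fun g : gT => (g ^+ l)%g) xpredT) //=.
apply: eq_bigr => h _; rewrite ffunE rmorph_sum mulr_suml.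
by apply: eq_bigr => g /eqP <-.
Qed.

End RepHat.

(* Fourier inversion: [a - b], read as a class function, is orthogonal to every
   irreducible character, all of which are linear. *)
Lemma rep_hat_inj (gT : finGroupType) (a b : QG gT) : abelian [set: gT] ->
  (forall r, is_rep r -> rep_hat r a = rep_hat r b) -> a = b.
Proof.
move=> cGG ab_hat; pose G := [set: gT]%G; pose d x : algC := ratr ((a - b) x).
have d_class : {in <<G>>%g &, forall x y, d (x ^ y)%g = d x}.
  move=> x y _ _; congr d; apply/conjg_fixP/commgP.
  exact: (centsP cGG) x (in_setT x) y (in_setT y).
have d_supp x : x \notin <<G>>%g -> d x = 0 by rewrite genGid inE.
pose phi : 'CF(G) := Cfun 0 (intro_class_fun d_class d_supp).
have phi0 : phi = 0.
  rewrite [phi]cfun_sum_cfdot big1 // => i _.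
  have lin_i : 'chi[G]_i \is a linear_char by apply/char_abelianP.
  have chi_rep : is_rep (fun x => ('chi[G]_i x)^*).
    split=> [x y | x]; first by rewrite (lin_charM lin_i) ?inE // rmorphM.
    by rewrite conjC_eq0 (lin_char_neq0 lin_i) ?inE.
  have hat0 : \sum_x d x * ('chi[G]_i x)^* = 0.
    by have := rep_hatB (fun x => ('chi[G]_i x)^*) a b; rewrite (ab_hat _ chi_rep) subrr.
  rewrite cfdotE (eq_bigl xpredT) => [|x]; last by rewrite inE.
  rewrite (eq_bigr (fun x => d x * ('chi[G]_i x)^*)) ?hat0 ?mulr0 ?scale0r //.
  by move=> x _; rewrite cfunE.
apply/ffunP => x; apply/eqP; rewrite -subr_eq0.
have : phi x = d x by rewrite cfunE.
by rewrite phi0 cfunE /d !ffunE => /esym/eqP; rewrite fmorph_eq0.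
Qed.

Section ChosenRepresentatives.

Variables (gT : finGroupType) (n : nat) (rep : 'I_n -> gT -> algC) (eid : 'I_n -> QG gT).
Hypotheses (cGG : abelian [set: gT]) (rep_rep : forall i, is_rep (rep i)).
Hypothesis rep_cover : forall chi, is_rep chi -> exists i, rep_equiv chi (rep i).
Hypothesis rep_uniq : forall i j, rep_equiv (rep i) (rep j) -> i = j.
Hypothesis eid_hat : forall i j, rep_hat (rep j) (eid i) = (if i == j then 1 else 0).

Lemma rep_ker_inj i j : (rep_ker (rep i) == rep_ker (rep j)) = (i == j).
Proof. by apply/eqP/eqP => [/rep_uniq | ->]. Qed.

Lemma rep_hat_chosen_eid k i : rep_hat (rep k) (eid i) = (i == k)%:R.
Proof. by rewrite eid_hat; case: eqP. Qed.

Lemma rep_hat_eid s i : is_rep s -> rep_hat s (eid i) = (rep_ker s == rep_ker (rep i))%:R.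
Proof.
move=> s_rep; have [m ker_sm] := rep_cover s_rep.
have [u sE] := rep_ker_galois (rep_rep m) s_rep (esym ker_sm).
rewrite (rep_hat_rmorph _ sE) rep_hat_chosen_eid ker_sm rep_ker_inj eq_sym.
by case: eqP; rewrite ?rmorph1 ?rmorph0.
Qed.

Lemma rep_hat_chosen_inj a b : (forall k, rep_hat (rep k) a = rep_hat (rep k) b) -> a = b.
Proof.
move=> ab_hat; apply: rep_hat_inj cGG _ => s s_rep; have [m ker_sm] := rep_cover s_rep.
have [u sE] := rep_ker_galois (rep_rep m) s_rep (esym ker_sm).
by rewrite !(rep_hat_rmorph _ sE) ab_hat.
Qed.

Lemma rep_hat_sum_eid k (P : pred 'I_n) : rep_hat (rep k) (\sum_(j | P j) eid j) = (P k)%:R.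
Proof.
rewrite rep_hat_sum (eq_bigr _ (fun j _ => rep_hat_chosen_eid k j)).
case: (boolP (P k)) => Pk; last first.
  by rewrite big1 // => j Pj; case: eqP Pj => // ->; rewrite (negbTE Pk).
by rewrite (bigD1 k) //= eqxx big1 ?addr0 // => j /andP[_ /negbTE->].
Qed.

Lemma rep_hat_psiQ_eid l k i :
  rep_hat (rep k) (psiQ l (eid i)) = (rep_ker (psi_rep l (rep k)) == rep_ker (rep i))%:R.
Proof. by rewrite rep_hat_psiQ rep_hat_eid //; apply: psi_rep_rep. Qed.

Lemma psiQ_coprime_eid l i : coprime l #|gT| -> psiQ l (eid i) = eid i.
Proof.
move=> co_lG; apply: rep_hat_chosen_inj => k.
by rewrite rep_hat_psiQ_eid rep_ker_psi_coprime // rep_ker_inj rep_hat_chosen_eid eq_sym.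
Qed.

Lemma rep_ker_psi_trivial l k i : [forall x, rep i x == 1] ->
  (rep_ker (psi_rep l (rep k)) == rep_ker (rep i))%:R
    = (i == k)%:R + (~~ [forall x, rep k x == 1]
                     && [forall x, psi_rep l (rep k) x == rep i x])%:R :> algC.
Proof.
move=> /[dup] i_triv; rewrite -rep_ker_eqT => /eqP kerT_i; rewrite kerT_i.
have [k_triv | k_nontriv] := boolP [forall x, rep k x == 1].
  have -> : i = k.
    by apply: rep_uniq; rewrite /rep_equiv kerT_i; apply/esym/eqP; rewrite rep_ker_eqT.
  by rewrite eqxx rep_ker_eqT psi_rep_trivial /= ?addr0.
have -> : (i == k) = false by apply: contraNF k_nontriv => /eqP <-.
have -> : [forall x, psi_rep l (rep k) x == rep i x] = [forall x, psi_rep l (rep k) x == 1].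
  by apply: eq_forallb => x; rewrite (eqP (forallP i_triv x)).
by rewrite rep_ker_eqT /= add0r.
Qed.

Variables (p e : nat).
Hypotheses (p_pr : prime p) (cardG : #|gT| = (p ^ e)%N).
Hypothesis rep_psi_compat : forall i j, (0 < level p (rep i))%N ->
  rep_equiv (psi_rep p (rep i)) (rep j) -> forall x, psi_rep p (rep i) x = rep j x.

Lemma rep_ker_psi_nontrivial k i : ~~ [forall x, rep i x == 1] ->
  (rep_ker (psi_rep p (rep k)) == rep_ker (rep i))
    = (0 < level p (rep k))%N && [forall x, psi_rep p (rep k) x == rep i x].
Proof.
move=> i_nontriv; apply/eqP/andP => [ker_ki | [_ /forallP psi_ki]]; last first.
  by apply/setP => x; rewrite !inE (eqP (psi_ki x)).
have level_k : (0 < level p (rep k))%N.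
  apply: (rep_level_gt0 (rep_rep k) p_pr cardG); apply: contra i_nontriv => k_triv.
  by rewrite -rep_ker_eqT -ker_ki rep_ker_eqT psi_rep_trivial.
by split=> //; apply/forallP => x; rewrite (rep_psi_compat level_k ker_ki).
Qed.

End ChosenRepresentatives.

Theorem mainTheorem8 (p e q : nat) (gT : finGroupType)
  (n : nat) (rep : 'I_n -> gT -> algC) (eid : 'I_n -> QG gT) :
  prime p -> (1 <= e)%N -> abelian [set: gT] -> #|gT| = (p ^ e)%N ->
  prime q -> q != p ->
  (forall i, is_rep (rep i)) ->
  (forall chi : gT -> algC, is_rep chi -> exists i, rep_equiv chi (rep i)) ->
  (forall i j, rep_equiv (rep i) (rep j) -> i = j) ->
  (forall i j, (0 < level p (rep i))%N ->
     rep_equiv (psi_rep p (rep i)) (rep j) ->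
     forall x, psi_rep p (rep i) x = rep j x) ->
  (forall i j, rep_hat (rep j) (eid i) = (if i == j then 1 else 0)) ->
  forall i,
    (~~ [forall x, rep i x == 1] ->
       psiQ p (eid i) =
       \sum_(j | (0 < level p (rep j))%N && [forall x, psi_rep p (rep j) x == rep i x]) eid j) /\
    ([forall x, rep i x == 1] ->
       psiQ p (eid i) =
       eid i + \sum_(j | ~~ [forall x, rep j x == 1] &&
                         [forall x, psi_rep p (rep j) x == rep i x]) eid j) /\
    psiQ q (eid i) = eid i.
Proof.
move=> p_pr _ cGG cardG q_pr q_neq_p rep_rep cover uniq compat eid_hat i.
have inj := rep_hat_chosen_inj cGG rep_rep cover.
have psi_eid := rep_hat_psiQ_eid rep_rep cover uniq eid_hat.
have sum_eid := rep_hat_sum_eid eid_hat.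
split; [move=> i_nontriv | split; [move=> i_triv |]].
- apply: inj => k; rewrite psi_eid sum_eid.
  by rewrite (rep_ker_psi_nontrivial rep_rep p_pr cardG compat).
- apply: inj => k; rewrite psi_eid rep_hatD sum_eid (rep_hat_chosen_eid eid_hat).
  exact: rep_ker_psi_trivial uniq _ _ _ i_triv.
- apply: (psiQ_coprime_eid cGG rep_rep cover uniq eid_hat).
  by rewrite cardG coprimeXr // prime_coprime // dvdn_prime2.
Qed.
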